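(* Let $g>\tfrac12$, $M_{\mathrm{I}},M_{\mathrm{II}}\in\mathbb{Z}_{\ge0}$, $M=M_{\mathrm{I}}+M_{\mathrm{II}}$, $M'=\frac12(M_{\mathrm{I}}-M_{\mathrm{II}})$, let $\mathcal{D}=((d_1,t_1),\ldots,(d_M,t_M))$ be an ordered list of pairwise distinct seed labels as in the context with $M_{\mathrm{I}}$ of Type I and $M_{\mathrm{II}}$ of Type II, and let $n\in\mathbb{Z}_{\ge0}$. For a seed label $(\mathrm{v},t)$ set $\xi_{(\mathrm{v},\mathrm{I})}(\eta)=L^{(g-\frac12)}_{\mathrm{v}}(-\eta)$, $\xi_{(\mathrm{v},\mathrm{II})}(\eta)=L^{(\frac12-g)}_{\mathrm{v}}(\eta)$, $\tilde{\mathcal{E}}_{(\mathrm{v},\mathrm{I})}=-4(g+\mathrm{v}+\frac12)$, $\tilde{\mathcal{E}}_{(\mathrm{v},\mathrm{II})}=-4(g-\mathrm{v}-\frac12)$, $\tilde\zeta_{(\mathrm{v},\mathrm{I})}(\eta)=2\eta L^{(g+\frac12)}_{\mathrm{v}}(-\eta)$, $\tilde\zeta_{(\mathrm{v},\mathrm{II})}(\eta)=-2(g-\frac12-\mathrm{v})L^{(-g-\frac12)}_{\mathrm{v}}(\eta)$, and set $\mathcal{E}_n=4n$, $\zeta_n(\eta)=-2\eta L^{(g+\frac12)}_{n-1}(\eta)$. Define the $(M+1)\times(M+1)$ matrix $(a_{j,k})$ by: for $1\le k\le M$, $a_{2l-1,k}=(-\tilde{\mathcal{E}}_{(d_k,t_k)})^{l-1}\xi_{(d_k,t_k)}(\eta)$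 and $a_{2l,k}=(-\tilde{\mathcal{E}}_{(d_k,t_k)})^{l-1}\tilde\zeta_{(d_k,t_k)}(\eta)$; and $a_{2l-1,M+1}=(-\mathcal{E}_n)^{l-1}L^{(g-\frac12)}_n(\eta)$, $a_{2l,M+1}=(-\mathcal{E}_n)^{l-1}\zeta_n(\eta)$ (for $1\le l\le[\frac{M+2}{2}]$ in odd rows and $1\le l\le[\frac{M+1}{2}]$ in even rows). Define the $M\times M$ matrix $(b_{j,k})$ by $b_{2l-1,k}=(-\tilde{\mathcal{E}}_{(d_k,t_k)})^{l-1}\xi_{(d_k,t_k)}(\eta)$, $1\le l\le[\frac{M+1}{2}]$, and $b_{2l,k}=(-\tilde{\mathcal{E}}_{(d_k,t_k)})^{l-1}\tilde\zeta_{(d_k,t_k)}(\eta)$, $1\le l\le[\frac M2]$. Then for $\eta>0$, $$P_{\mathcal{D},n}(\eta)=2^{-\frac12M(M+1)}\det(a_{j,k})_{1\le j,k\le M+1}\;\eta^{-([M']+1)([M']+M-2[\frac M2])},$$ $$\Xi_{\mathcal{D}}(\eta)=2^{-\frac12M(M-1)}\det(b_{j,k})_{1\le j,k\le M}\;\eta^{-[M']([M']+M-2[\frac M2])}.$$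
   Context: $[a]$ denotes the greatest integer not exceeding $a$, and $[a]'$ the greatest integer strictly less than $a$. $(a)_k=a(a+1)\cdots(a+k-1)$, $(a)_0=1$. For real $\alpha$ and $m\in\mathbb{Z}_{\ge0}$, $L^{(\alpha)}_m(\eta)=\frac{1}{m!}\sum_{k=0}^m\frac{(-m)_k}{k!}(\alpha+k+1)_{m-k}\eta^k$, and $L^{(\alpha)}_m\equiv0$ for $m<0$. Fix $g>\frac12$. A seed label is a pair $(\mathrm{v},t)$ with $t\in\{\mathrm{I},\mathrm{II}\}$, $\mathrm{v}\in\mathbb{Z}_{\ge0}$ if $t=\mathrm{I}$ and $\mathrm{v}\in\{0,1,\ldots,[g-\frac12]'\}$ if $t=\mathrm{II}$. For $\eta>0$ let $\mu_{(\mathrm{v},\mathrm{I})}(\eta)=e^{\eta}L^{(g-\frac12)}_{\mathrm{v}}(-\eta)$, $\mu_{(\mathrm{v},\mathrm{II})}(\eta)=\eta^{\frac12-g}L^{(\frac12-g)}_{\mathrm{v}}(\eta)$, $P_n(\eta)=L^{(g-\frac12)}_n(\eta)$, and $\mathrm{W}[f_1,\ldots,f_m](\eta)=\det\big(\frac{d^{j-1}f_k}{d\eta^{j-1}}\big)_{1\le j,k\le m}$. For $\mathcal{D}$ as in the claim, $\Xi_{\mathcal{D}}(\eta)=\mathrm{W}[\mu_{(d_1,t_1)},\ldots,\mu_{(d_M,t_M)}](\eta)\,\eta^{(M_{\mathrm{I}}+g-\frac12)M_{\mathrm{II}}}e^{-M_{\mathrm{I}}\eta}$ and $P_{\mathcal{D},n}(\eta)=\mathrm{W}[\mu_{(d_1,t_1)},\ldots,\mu_{(d_M,t_M)},P_n](\eta)\,\eta^{(M_{\mathrm{I}}+g+\frac12)M_{\mathrm{II}}}e^{-M_{\mathrm{I}}\eta}$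 (the multi-indexed Laguerre polynomials). *)

From HB Require Import structures.
From mathcomp Require Import all_boot all_order all_algebra.
From mathcomp Require Import all_classical all_reals all_analysis.
Set Implicit Arguments. Unset Strict Implicit. Unset Printing Implicit Defensive.
Import Order.TTheory GRing.Theory Num.Theory.
Import numFieldNormedType.Exports.
Local Open Scope ring_scope.

Section Defs.
Variable R : realType.

Definition poch (a : R) (k : nat) : R := \prod_(i < k) (a + i%:R).

Definition laguerre (alpha : R) (m : int) (x : R) : R :=
  match m with
  | Posz m' => (m'`!%:R)^-1 *
      \sum_(k < m'.+1) (poch (- m'%:R) k / (k`!%:R)) *
                       poch (alpha + k%:R + 1) (m' - k) * x ^+ k
  | Negz _ => 0
  end.

(* Seed label (v, t): t = true means Type I, t = false means Type II *)
Definition label := (nat * bool)%type.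

(* validity: Type II requires v <= [g - 1/2]', i.e. v < g - 1/2 *)
Definition valid_label (g : R) (l : label) : bool :=
  l.2 || (l.1%:R < g - 2^-1).

Definition mu (g : R) (l : label) : R -> R :=
  if l.2 then fun x => expR x * laguerre (g - 2^-1) l.1 (- x)
  else fun x => powR x (2^-1 - g) * laguerre (2^-1 - g) l.1 x.

Definition Pn (g : R) (n : nat) : R -> R := fun x => laguerre (g - 2^-1) n x.

Definition wronskian (fs : seq (R -> R)) (x : R) : R :=
  \det (\matrix_(j < size fs, k < size fs)
          derive1n j (nth (fun _ => 0) fs k) x).

Definition countI (D : seq label) : nat := count (fun l : label => l.2) D.
Definition countII (D : seq label) : nat := count (fun l : label => ~~ l.2) D.

Definition Xi (g : R) (D : seq label) (x : R) : R :=
  wronskian (map (mu g) D) x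
  * powR x (((countI D)%:R + g - 2^-1) * (countII D)%:R)
  * expR (- ((countI D)%:R * x)).

Definition PDn (g : R) (D : seq label) (n : nat) (x : R) : R :=
  wronskian (rcons (map (mu g) D) (Pn g n)) x
  * powR x (((countI D)%:R + g + 2^-1) * (countII D)%:R)
  * expR (- ((countI D)%:R * x)).

Definition xi (g : R) (l : label) (x : R) : R :=
  if l.2 then laguerre (g - 2^-1) l.1 (- x) else laguerre (2^-1 - g) l.1 x.

Definition Etil (g : R) (l : label) : R :=
  if l.2 then - 4 * (g + l.1%:R + 2^-1) else - 4 * (g - l.1%:R - 2^-1).

Definition zetatil (g : R) (l : label) (x : R) : R :=
  if l.2 then 2 * x * laguerre (g + 2^-1) l.1 (- x)
  else - 2 * (g - 2^-1 - l.1%:R) * laguerre (- g - 2^-1) l.1 x.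

Definition En (n : nat) : R := 4 * n%:R.
Definition zetan (g : R) (n : nat) (x : R) : R :=
  - 2 * x * laguerre (g + 2^-1) (n%:Z - 1) x.

(* entry in 0-based row i: row i+1 (1-based) is odd iff i even;
   rows 2l-1 and 2l both carry power l-1 = i./2 *)
Definition amat (g : R) (D : seq label) (n : nat) (x : R)
  : 'M[R]_((size D).+1) :=
  \matrix_(i < (size D).+1, k < (size D).+1)
    if (k < size D)%N then
      let l := nth (0%N, true) D k in
      (- Etil g l) ^+ (i./2) * (if odd i then zetatil g l x else xi g l x)
    else
      (- En n) ^+ (i./2) * (if odd i then zetan g n x else laguerre (g - 2^-1) n x).

Definition bmat (g : R) (D : seq label) (x : R) : 'M[R]_(size D) :=
  \matrix_(i < size D, k < size D)
    let l := nth (0%N, true) D k in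
    (- Etil g l) ^+ (i./2) * (if odd i then zetatil g l x else xi g l x).

End Defs.

From HB Require Import structures.
From mathcomp Require Import all_boot all_order all_algebra.
From mathcomp Require Import all_classical all_reals all_analysis.
From mathcomp Require Import zify ring.
Import Order.TTheory GRing.Theory Num.Theory.
Set Implicit Arguments. Unset Strict Implicit. Unset Printing Implicit Defensive.
Local Open Scope ring_scope.

(* Every column of the Wronskian has the form f(y) = e^(a y) y^b q(y) with q a Laguerre
   polynomial: (a, b) = (1, 0) for type I, (0, 1/2 - g) for type II and (0, 0) for P_n.
   Each such f solves y f'' + (g + 1/2 - y) f' + (E/4) f = 0, where E is the energy of the
   column (tilde E or E_n), so differentiating j times gives
     y f^(j+2) + (j + g + 1/2 - y) f^(j+1) + (E/4 - j) f^(j) = 0.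
   Solving this recurrence expresses f^(j) as a combination of the (E/4)^[i/2] f^(i mod 2),
   i <= j, with coefficients that do not depend on E, hence not on the column; their matrix
   is triangular with diagonal (-1/y)^[j/2].  The Wronskian is therefore
   prod_j (-1/y)^[j/2] times the determinant with rows (E/4)^[j/2] f^(j mod 2).  Writing
   f' = e^(a y) y^(b-1) zeta/2 and pulling e^(a y) y^b out of each column and powers of 2
   and y out of each row leaves (a_{j,k}) (resp. (b_{j,k})); the gauge factors in the
   definitions of P_{D,n} and Xi_D cancel the exponentials and leave the stated power of y. *)

Section ThreeTermRecurrence.
Variables (F : fieldType) (x al : F).

(* [rec_coef j i] is the coefficient of [lam ^+ i./2 * d (odd i)] in [d j] for every
   solution [d] of the recurrence [d_rec] below; it does not depend on [lam]. *)
Fixpoint rec_coef (j : nat) : nat -> F :=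
  match j with
  | 0 => fun i => (i == 0)%:R
  | 1 => fun i => (i == 1)%:R
  | (j'.+1 as j1).+1 => fun i =>
      x^-1 * (j'%:R * rec_coef j' i
              - (if (1 < i)%N then rec_coef j' i.-2 else 0)
              - (j'%:R + al + 1 - x) * rec_coef j1 i)
  end.

Lemma rec_coefSS j i : rec_coef j.+2 i =
  x^-1 * (j%:R * rec_coef j i - (if (1 < i)%N then rec_coef j i.-2 else 0)
          - (j%:R + al + 1 - x) * rec_coef j.+1 i).
Proof. by []. Qed.

Lemma rec_coef_gt j i : (j < i)%N -> rec_coef j i = 0.
Proof.
suff: (forall i, (j < i)%N -> rec_coef j i = 0) /\
      (forall i, (j.+1 < i)%N -> rec_coef j.+1 i = 0) by case=> + _; apply.
elim: j => [|j [IH1 IH2]] {i}; first by split=> -[|[|i]].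
split=> // -[|[|i]] // hi.
rewrite rec_coefSS IH1 ?IH2 ?(IH1 i); try lia.
by rewrite !mulr0 !subr0 mulr0.
Qed.

Lemma rec_coef_diag j : rec_coef j j = (- x^-1) ^+ j./2.
Proof.
suff: rec_coef j j = (- x^-1) ^+ j./2 /\ rec_coef j.+1 j.+1 = (- x^-1) ^+ j.+1./2
  by case.
elim: j => [|j [IH1 IH2]]; first by [].
split=> //; rewrite rec_coefSS IH1 (@rec_coef_gt j) ?(@rec_coef_gt j.+1) //=.
by rewrite exprS; ring.
Qed.

Variables (lam : F) (d : nat -> F).
Hypothesis x_neq0 : x != 0.
Hypothesis d_rec : forall j,
  x * d j.+2 + (j%:R + al + 1 - x) * d j.+1 + (lam - j%:R) * d j = 0.

Lemma rec_expand N j : (j < N)%N ->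
  d j = \sum_(i < N) rec_coef j i * (lam ^+ i./2 * d (odd i)).
Proof.
move: N; pose expansion j := forall N, (j < N)%N ->
  d j = \sum_(i < N) rec_coef j i * (lam ^+ i./2 * d (odd i)).
suff: expansion j /\ expansion j.+1 by case.
elim: j => [|j [IH1 IH2]].
  split=> N hN; rewrite (bigD1 (Ordinal hN)) //= big1 ?addr0 ?eqxx ?mul1r //;
    move=> i; rewrite -val_eqE /= => /negbTE ->; exact: mul0r.
split=> // N hN.
have shift : \sum_(i < N) (if (1 < i)%N then rec_coef j i.-2 else 0)
                           * (lam ^+ i./2 * d (odd i)) = lam * d j.
  case: N hN => [|[|N]] // hN.
  rewrite !big_ord_recl /= !mul0r !add0r (IH1 N) ?mulr_sumr; last by lia.
  by apply: eq_bigr => i _; rewrite /= negbK exprS; ring.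
have dSS : d j.+2 = x^-1 * (j%:R * d j - lam * d j - (j%:R + al + 1 - x) * d j.+1).
  apply: (mulfI x_neq0); rewrite mulrA mulfV // mul1r.
  by rewrite -[LHS]subr0 -(d_rec j); ring.
rewrite dSS -shift (IH1 N) ?(IH2 N); try lia.
rewrite !mulr_sumr -!sumrB mulr_sumr; apply: eq_bigr => i _.
by rewrite rec_coefSS; ring.
Qed.

End ThreeTermRecurrence.

Lemma det_three_term_rec (F : fieldType) (x al : F) N (lam : 'I_N -> F)
    (d : 'I_N -> nat -> F) :
  x != 0 ->
  (forall k j, x * d k j.+2 + (j%:R + al + 1 - x) * d k j.+1
               + (lam k - j%:R) * d k j = 0) ->
  \det (\matrix_(j < N, k < N) d k j) =
  (\prod_(j < N) (- x^-1) ^+ j./2) *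
  \det (\matrix_(j < N, k < N) (lam k ^+ j./2 * d k (odd j))).
Proof.
move=> x_neq0 d_rec.
have -> : \matrix_(j < N, k < N) d k j =
    \matrix_(j < N, i < N) rec_coef x al j i *m
    \matrix_(i < N, k < N) (lam k ^+ i./2 * d k (odd i)).
  apply/matrixP => j k; rewrite !mxE (rec_expand x_neq0 (d_rec k) (ltn_ord j)).
  by apply: eq_bigr => i _; rewrite !mxE.
rewrite det_mulmx det_trig; last by apply/is_trig_mxP => j i ji; rewrite mxE rec_coef_gt.
by congr (_ * _); apply: eq_bigr => j _; rewrite mxE rec_coef_diag.
Qed.

Lemma det_scale_rows_cols (R : comNzRingType) N (r c : 'I_N -> R) (A : 'M[R]_N) :
  \det (\matrix_(j < N, k < N) (r j * A j k * c k)) =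
  (\prod_(j < N) r j) * (\prod_(k < N) c k) * \det A.
Proof.
have -> : \matrix_(j < N, k < N) (r j * A j k * c k) =
    diag_mx (\row_j r j) *m A *m diag_mx (\row_k c k).
  by apply/matrixP => j k; rewrite mul_mx_diag mul_diag_mx !mxE.
rewrite !det_mulmx !det_diag mulrAC.
by congr (_ * _ * _); apply: eq_bigr => i _; rewrite mxE.
Qed.

Lemma sum_uphalf N : (\sum_(j < N) uphalf j)%N = (N./2 * uphalf N)%N.
Proof. by elim: N => [|N IH]; rewrite ?big_ord0 // big_ord_recr IH /= mulnSr mulnC. Qed.

Lemma row_scaleE (F : fieldType) (y : F) j :
  (4 * y)^-1 ^+ j./2 * (if odd j then (2 * y)^-1 else 1) = (2 ^+ j * y ^+ uphalf j)^-1.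
Proof.
rewrite uphalf_half -[in 2 ^+ j](odd_double_half j) -muln2 exprD exprM expr2.
rewrite exprD (_ : 4 = 2 * 2); last by ring.
by case: (odd j); rewrite !invfM -!exprVn ?exprMn ?invfM; ring.
Qed.

Lemma prod_row_scales (F : fieldType) (y : F) N :
  \prod_(j < N) ((4 * y)^-1 ^+ j./2 * (if odd j then (2 * y)^-1 else 1))
  = (2 ^+ 'C(N, 2) * y ^+ (N./2 * uphalf N))^-1.
Proof.
under eq_bigr do rewrite row_scaleE.
by rewrite prodfV big_split /= !prodrXr -sum_uphalf -bin2_sum big_mkord.
Qed.

Section LaguerreCoefficients.
Variable R : realType.
Implicit Types (a al : R) (m k : nat).

Lemma poch0 a : poch a 0 = 1.
Proof. exact: big_ord0. Qed.

Lemma pochS a m : poch a m.+1 = a * poch (a + 1) m.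
Proof.
rewrite /poch big_ord_recl /= addr0; congr (_ * _); apply: eq_bigr => i _.
by rewrite /bump /= add1n -addn1 natrD; ring.
Qed.

Lemma pochSr a m : poch a m.+1 = poch a m * (a + m%:R).
Proof. exact: big_ord_recr. Qed.

Lemma poch_Nnat_eq0 m k : (m < k)%N -> poch (- m%:R : R) k = 0.
Proof.
by move=> mk; rewrite /poch (bigD1 (Ordinal mk)) //= addNr mul0r.
Qed.

Definition lag_coef al m k : R :=
  poch (- m%:R) k * poch (al + k%:R + 1) (m - k) / (k`!%:R * m`!%:R).

Lemma lag_coef_gt al m k : (m < k)%N -> lag_coef al m k = 0.
Proof. by move=> mk; rewrite /lag_coef poch_Nnat_eq0 // !mul0r. Qed.

Lemma natr_fact_neq0 k : (k`!%:R : R) != 0.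
Proof. by rewrite pnatr_eq0 -lt0n fact_gt0. Qed.

Lemma natrS_neq0 k : (k%:R + 1 : R) != 0.
Proof. by rewrite natr1 pnatr_eq0. Qed.

Lemma lag_coef_succ al m k :
  k.+1%:R * (k%:R + al + 1) * lag_coef al m k.+1 = (k%:R - m%:R) * lag_coef al m k.
Proof.
have [km|] := ltnP k m; last first.
  rewrite leq_eqVlt => /orP[/eqP-> | mk]; first by rewrite subrr mul0r lag_coef_gt ?mulr0.
  by rewrite !lag_coef_gt ?mulr0 //; lia.
have [p ->] : exists p, m = (k + p.+1)%N by exists (m - k.+1)%N; lia.
rewrite /lag_coef; have -> : (k + p.+1 - k = p.+1)%N by lia.
have -> : (k + p.+1 - k.+1 = p)%N by lia.
rewrite pochSr pochS factS !natrM natrD -natr1.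
have := natr_fact_neq0 k; have := natr_fact_neq0 (k + p.+1).
by move=> h1 h2; rewrite !addrA; field; rewrite h1 h2 natrS_neq0.
Qed.

Lemma lag_coef_deriv al m k :
  k.+1%:R * lag_coef al m.+1 k.+1 = - lag_coef (al + 1) m k.
Proof.
rewrite /lag_coef subSS pochS.
have -> : - m.+1%:R + 1 = - m%:R :> R by rewrite -natr1; ring.
have -> : al + k.+1%:R + 1 = al + 1 + k%:R + 1 by rewrite -natr1; ring.
have := natr_fact_neq0 k; have := natr_fact_neq0 m.
by move=> h1 h2; rewrite !factS !natrM -!natr1; field; rewrite h1 h2 !natrS_neq0.
Qed.

Lemma lag_coef_shift al m k :
  lag_coef al m k - k.+1%:R * lag_coef al m k.+1 = lag_coef (al + 1) m k.
Proof.
have [km|mk|->] := ltngtP k m.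
- have [p ->] : exists p, m = (k + p.+1)%N by exists (m - k.+1)%N; lia.
  rewrite /lag_coef; have -> : (k + p.+1 - k = p.+1)%N by lia.
  have -> : (k + p.+1 - k.+1 = p)%N by lia.
  rewrite [poch (- _) k.+1]pochSr [poch (al + _ + 1) p.+1]pochS.
  rewrite [poch (al + 1 + _ + 1) p.+1]pochSr.
  have -> : al + k.+1%:R + 1 = al + k%:R + 1 + 1 by rewrite -natr1; ring.
  have -> : al + 1 + k%:R + 1 = al + k%:R + 1 + 1 by ring.
  have := natr_fact_neq0 k; have := natr_fact_neq0 (k + p.+1).
  move=> h1 h2; rewrite factS !natrM !natrD -!natr1.
  by field; rewrite h1 h2 natrS_neq0.
- by rewrite !lag_coef_gt ?mulr0 ?subr0 //; lia.
- by rewrite (@lag_coef_gt _ m m.+1) // mulr0 subr0 /lag_coef subnn !poch0 !mulr1.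
Qed.

Lemma lag_coef_lower al m k :
  (k%:R + al) * lag_coef al m k = (m%:R + al) * lag_coef (al - 1) m k.
Proof.
have [mk|km] := ltnP m k; first by rewrite !lag_coef_gt // !mulr0.
have [p ->] : exists p, m = (k + p)%N by exists (m - k)%N; lia.
rewrite /lag_coef; have -> : (k + p - k = p)%N by lia.
rewrite (_ : al - 1 + k%:R + 1 = al + k%:R); last by ring.
have e := pochSr (al + k%:R) p; rewrite pochS in e.
move: e; set A := poch (- _) k; set C := (_ * _)^-1.
set P1 := poch _ p; set P0 := poch _ p => e.
have -> : (k%:R + al) * (A * P1 * C) = A * ((al + k%:R) * P1) * C by ring.
by rewrite e natrD; ring.
Qed.

End LaguerreCoefficients.

Section LaguerrePolynomials.
Variable R : realType.
Implicit Types (s al : R) (m : nat).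

Definition lagpoly s al m : {poly R} := \poly_(k < m.+1) (s ^+ k * lag_coef al m k).

Lemma coef_lagpoly s al m k : (lagpoly s al m)`_k = s ^+ k * lag_coef al m k.
Proof. by rewrite coef_poly; case: ltnP => // mk; rewrite lag_coef_gt ?mulr0. Qed.

Lemma laguerre_lagpoly al m y : laguerre al m y = (lagpoly 1 al m).[y].
Proof.
rewrite /laguerre /lagpoly horner_poly mulr_sumr; apply: eq_bigr => k _.
by rewrite expr1n mul1r /lag_coef; field; rewrite !natr_fact_neq0.
Qed.

Lemma laguerreN_lagpoly al m y : laguerre al m (- y) = (lagpoly (-1) al m).[y].
Proof.
rewrite /laguerre /lagpoly horner_poly mulr_sumr; apply: eq_bigr => k _.
by rewrite exprNn /lag_coef; field; rewrite !natr_fact_neq0.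
Qed.

Lemma lagpoly_ode s al m :
  'X * (lagpoly s al m)^`()^`() + ((al + 1)%:P - s%:P * 'X) * (lagpoly s al m)^`()
  + (s * m%:R)%:P * lagpoly s al m = 0.
Proof.
have succ j : s ^+ j.+1 * (j.+1%:R * (j%:R + al + 1) * lag_coef al m j.+1
                           - (j%:R - m%:R) * lag_coef al m j) = 0.
  by rewrite lag_coef_succ subrr mulr0.
apply/polyP => i; rewrite coef0 !coefD mulrBl coefB -mulrA !coefCM !coefXM.
rewrite !coef_deriv !coef_lagpoly.
by case: i => [|i] /=; [rewrite -[RHS](succ 0) | rewrite -[RHS](succ i.+1) !exprS]; ring.
Qed.

Lemma lagpoly_deriv al m : (lagpoly 1 al m.+1)^`() = - lagpoly 1 (al + 1) m.
Proof.
apply/polyP => k; rewrite coef_deriv coefN !coef_lagpoly !expr1n !mul1r.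
by rewrite -mulr_natr mulrC lag_coef_deriv.
Qed.

Lemma lagpoly0_deriv s al : (lagpoly s al 0)^`() = 0.
Proof.
by apply/polyP => k; rewrite coef_deriv coef0 coef_lagpoly lag_coef_gt ?mulr0 ?mul0rn.
Qed.

Lemma lagpolyN_shift al m :
  lagpoly (-1) al m + (lagpoly (-1) al m)^`() = lagpoly (-1) (al + 1) m.
Proof.
apply/polyP => k; rewrite coefD coef_deriv !coef_lagpoly -lag_coef_shift exprS.
ring.
Qed.

Lemma lagpoly_lower al m :
  al%:P * lagpoly 1 al m + 'X * (lagpoly 1 al m)^`() = (m%:R + al)%:P * lagpoly 1 (al - 1) m.
Proof.
apply/polyP => k; rewrite coefD !coefCM coefXM !coef_lagpoly !expr1n !mul1r.
case: k => [|k] /=; last rewrite coef_deriv coef_lagpoly expr1n mul1r.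
  by rewrite -(lag_coef_lower al m 0); ring.
by rewrite -(lag_coef_lower al m k.+1); ring.
Qed.

End LaguerrePolynomials.

Section ExpPow.
Variable R : realType.
Implicit Types (a b al lam y : R) (q : {poly R}).

Definition exppow a b q : R -> R := fun y => expR (a * y) * powR y b * q.[y].

Definition dpoly a b q : {poly R} := a%:P * 'X * q + b%:P * q + 'X * q^`().

Fixpoint dpolyn a b q j : {poly R} :=
  if j is j'.+1 then dpoly a (b - j'%:R) (dpolyn a b q j') else q.

Lemma powR_pred y b : 0 < y -> powR y b = y * powR y (b - 1).
Proof.
move=> y_gt0; rewrite -[X in powR y X = _](subrK 1 b) [LHS]powRD ?(gt_eqF y_gt0) ?implybT //.
by rewrite powRr1 ?ltW // mulrC.
Qed.

Lemma is_derive_exppow a b q y : 0 < y ->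
  is_derive y 1 (exppow a b q) (exppow a (b - 1) (dpoly a b q) y).
Proof.
move=> y_gt0.
have da : is_derive y 1 (fun z : R => a * z) a.
  by apply: is_derive_eq; rewrite /GRing.scale /= mulr1.
have dexp := is_derive1_comp (is_derive_expR (a * y)) da.
have d := is_deriveM (is_deriveM dexp (is_derive1_powR b y_gt0)) (is_derive_poly q y).
apply: is_derive_eq.
have -> : ((expR \o *%R a) * (@powR R)^~ b) y = expR (a * y) * powR y b by [].
rewrite /exppow /dpoly !hornerE (powR_pred b y_gt0) /GRing.scale /=.
ring.
Qed.

Lemma derive1n_exppow a b q j y : 0 < y ->
  derive1n j (exppow a b q) y = exppow a (b - j%:R) (dpolyn a b q j) y.
Proof.
elim: j y => [|j IH] y y_gt0; first by rewrite derive1n0 subr0.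
rewrite derive1nS derive1E.
rewrite (@near_eq_derive _ _ _ _ (exppow a (b - j%:R) (dpolyn a b q j))); last first.
  by near=> z; apply: IH; near: z; exact: lt_nbhsr.
rewrite (@derive_val _ _ _ _ _ _ _ (is_derive_exppow _ _ _ y_gt0)) /=.
by rewrite -natr1 opprD addrA.
Unshelve. all: by end_near.
Qed.

(* [ode_poly a b al lam q j] is [expR (- a y) y^(j + 1 - b)] times
   [y f^(j+2) + (j + al + 1 - y) f^(j+1) + (lam - j) f^(j)] for [f = exppow a b q]. *)
Definition ode_poly a b al lam q j : {poly R} :=
  dpolyn a b q j.+2 + ((j%:R + al + 1)%:P - 'X) * dpolyn a b q j.+1
  + (lam - j%:R)%:P * 'X * dpolyn a b q j.

Lemma ode_polyS a b al lam q j :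
  ode_poly a b al lam q j.+1
  = dpoly a (b - j.+2%:R) (ode_poly a b al lam q j) + ode_poly a b al lam q j.
Proof.
rewrite /ode_poly /= /dpoly !poly.derivE !(polyCB, polyCD, polyC_natr, polyC1).
ring.
Qed.

Lemma ode_poly_eq0 a b al lam q j :
  ode_poly a b al lam q 0 = 0 -> ode_poly a b al lam q j = 0.
Proof.
move=> ode0; elim: j => // j IH.
by rewrite ode_polyS IH /dpoly deriv0 !mulr0 !addr0.
Qed.

Lemma exppow_rec a b al lam q y j : 0 < y -> ode_poly a b al lam q 0 = 0 ->
  y * derive1n j.+2 (exppow a b q) y
  + (j%:R + al + 1 - y) * derive1n j.+1 (exppow a b q) y
  + (lam - j%:R) * derive1n j (exppow a b q) y = 0.
Proof.
move=> y_gt0 /(ode_poly_eq0 j); rewrite /ode_poly !derive1n_exppow // /exppow.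
have -> : b - j.+2%:R = b - j%:R - 1 - 1 by rewrite -!natr1; ring.
have -> : b - j.+1%:R = b - j%:R - 1 by rewrite -natr1; ring.
rewrite (powR_pred (b - j%:R) y_gt0) (powR_pred (b - j%:R - 1) y_gt0).
move: (dpolyn a b q j.+2) (dpolyn a b q j.+1) (dpolyn a b q j) => Q2 Q1 Q0.
move/(congr1 (horner^~ y)) => ode; rewrite !hornerE in ode.
set E := expR _; set P := powR y _.
by rewrite -(mulr0 (E * P * y)) -ode; ring.
Qed.

End ExpPow.

Lemma wronskian_exppow (R : realType) (fs : seq (R -> R)) N (A : 'M[R]_N) (y al : R)
    (a b E : 'I_N -> R) (q : 'I_N -> {poly R}) :
  0 < y -> size fs = N ->
  (forall k : 'I_N, nth (fun=> 0) fs k = exppow (a k) (b k) (q k)) ->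
  (forall k, ode_poly (a k) (b k) al (E k / 4) (q k) 0 = 0) ->
  (forall j k, A j k = (- E k) ^+ j./2 *
     (if odd j then 2 * (dpoly (a k) (b k) (q k)).[y] else (q k).[y])) ->
  wronskian fs y = (2 ^+ 'C(N, 2) * y ^+ (N./2 * uphalf N))^-1
                   * \prod_(k < N) (expR (a k * y) * powR y (b k)) * \det A.
Proof.
move=> y_gt0 size_fs; subst N => fsE ode Ajk.
have y_neq0 : y != 0 by rewrite gt_eqF.
rewrite /wronskian (det_three_term_rec (al := al) (lam := fun k => E k / 4)
  (d := fun k j => derive1n j (nth (fun=> 0) fs k) y) y_neq0); last first.
  by move=> k j; rewrite fsE; apply: exppow_rec.
pose r j := (- 4^-1) ^+ j./2 * (if odd j then (2 * y)^-1 else 1).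
pose c k := expR (a k * y) * powR y (b k).
have -> : \matrix_(j, k) ((E k / 4) ^+ j./2 * derive1n (odd j) (nth (fun=> 0) fs k) y)
          = \matrix_(j, k) (r j * A j k * c k).
  apply/matrixP => j k; rewrite !mxE Ajk fsE /r /c.
  rewrite (_ : E k / 4 = - 4^-1 * - E k); last by ring.
  rewrite exprMn; case: (odd j).
    rewrite derive1n_exppow // /exppow /= mulr1n mulr0n subr0 (powR_pred (b k) y_gt0).
    by field.
  by rewrite derive1n0 /exppow; ring.
rewrite det_scale_rows_cols !mulrA -big_split /= -prod_row_scales.
congr (_ * _ * _); apply: eq_bigr => j _.
by rewrite /r mulrA -exprMn; congr (_ ^+ _ * _); rewrite mulrNN invfM mulrC.
Qed.

Section Seeds.
Variables (R : realType) (g : R).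
Implicit Types (l : label) (y : R).

Definition seed_a l : R := if l.2 then 1 else 0.
Definition seed_b l : R := if l.2 then 0 else 2^-1 - g.
Definition seed_poly l : {poly R} :=
  if l.2 then lagpoly (-1) (g - 2^-1) l.1 else lagpoly 1 (2^-1 - g) l.1.

Lemma mu_exppow l : mu g l = exppow (seed_a l) (seed_b l) (seed_poly l).
Proof.
apply/funext => y; rewrite /mu /exppow /seed_a /seed_b /seed_poly; case: l.2.
  by rewrite mul1r powRr0 mulr1 laguerreN_lagpoly.
by rewrite mul0r expR0 mul1r laguerre_lagpoly.
Qed.

Lemma Pn_exppow n : Pn g n = exppow 0 0 (lagpoly 1 (g - 2^-1) n).
Proof.
by apply/funext => y; rewrite /Pn /exppow mul0r expR0 mul1r powRr0 mul1r laguerre_lagpoly.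
Qed.

Lemma xi_seed_poly l y : xi g l y = (seed_poly l).[y].
Proof. by rewrite /xi /seed_poly; case: l.2; rewrite ?laguerreN_lagpoly ?laguerre_lagpoly. Qed.

Lemma zetatil_dpoly l y :
  zetatil g l y = 2 * (dpoly (seed_a l) (seed_b l) (seed_poly l)).[y].
Proof.
rewrite /zetatil /seed_a /seed_b /seed_poly /dpoly; case: l => v []; cbn [fst snd].
  rewrite (_ : g + 2^-1 = g - 2^-1 + 1); last by field.
  by rewrite laguerreN_lagpoly -lagpolyN_shift !hornerE; ring.
rewrite (_ : - g - 2^-1 = 2^-1 - g - 1); last by field.
rewrite laguerre_lagpoly mul0r mul0r add0r lagpoly_lower hornerCM; ring.
Qed.

Lemma zetan_dpoly n y : zetan g n y = 2 * (dpoly 0 0 (lagpoly 1 (g - 2^-1) n)).[y].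
Proof.
rewrite /zetan /dpoly !mul0r !add0r.
case: n => [|n].
  have -> : (0%:Z - 1 = Negz 0)%R by [].
  by rewrite lagpoly0_deriv !mulr0 horner0 mulr0.
rewrite (_ : n.+1%:Z - 1 = n)%R; last by rewrite -addn1 PoszD addrK.
rewrite (_ : g + 2^-1 = g - 2^-1 + 1); last by field.
by rewrite lagpoly_deriv laguerre_lagpoly hornerM hornerN hornerX; ring.
Qed.

Lemma seed_ode l :
  ode_poly (seed_a l) (seed_b l) (g - 2^-1) (Etil g l / 4) (seed_poly l) 0 = 0.
Proof.
rewrite /seed_a /seed_b /seed_poly /Etil /ode_poly /= /dpoly; case: l => v []; cbn [fst snd].
  rewrite (_ : - 4 * (g + v%:R + 2^-1) / 4 = - (g - 2^-1 + v%:R + 1)); last by field.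
  rewrite -[RHS](mulr0 'X) -(lagpoly_ode (-1) (g - 2^-1) v).
  rewrite !poly.derivE !(polyCB, polyCD, polyCM, polyCN, polyC_natr, polyC1, polyC0).
  ring.
rewrite (_ : - 4 * (g - v%:R - 2^-1) / 4 = v%:R - (g - 2^-1)); last by field.
rewrite -[RHS](mulr0 'X) -(lagpoly_ode 1 (2^-1 - g) v).
rewrite !poly.derivE !(polyCB, polyCD, polyCM, polyCN, polyC_natr, polyC1, polyC0).
ring.
Qed.

Lemma Pn_ode n :
  ode_poly 0 0 (g - 2^-1) (En R n / 4) (lagpoly 1 (g - 2^-1) n) 0 = 0.
Proof.
rewrite (_ : En R n / 4 = n%:R); last by rewrite /En; field.
rewrite -[RHS](mulr0 'X) -(lagpoly_ode 1 (g - 2^-1) n) /ode_poly /= /dpoly.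
rewrite !poly.derivE !(polyCB, polyCD, polyCM, polyCN, polyC_natr, polyC1, polyC0).
ring.
Qed.

Lemma prod_seed_weights (D : seq label) y : 0 < y ->
  \prod_(k < size D) (expR (seed_a (nth (0%N, true) D k) * y)
                      * powR y (seed_b (nth (0%N, true) D k)))
  = expR ((countI D)%:R * y) * powR y ((countII D)%:R * (2^-1 - g)).
Proof.
move=> y_gt0; elim: D => [|l D IH].
  by rewrite big_ord0 /countI /countII /= !mul0r expR0 powRr0 mulr1.
rewrite big_ord_recl IH /countI /countII /seed_a /seed_b.
case: l => v []; cbn [count nth snd negb nat_of_bool nat_of_ord]; rewrite !natrD !mulrDl !mul1r.
  by rewrite powRr0 expRD; ring.
by rewrite mul0r expR0 [in RHS]powRD ?(gt_eqF y_gt0) ?implybT //; ring.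
Qed.

Lemma seed_weights_powR y (k m : nat) : 0 < y ->
  powR y (m%:R * (2^-1 - g)) * powR y ((k%:R + g - 2^-1) * m%:R) = y ^+ (k * m).
Proof.
move=> y_gt0; rewrite -powRD ?(gt_eqF y_gt0) ?implybT //.
rewrite -powR_mulrn ?ltW //; congr (powR y _); rewrite natrM; ring.
Qed.

End Seeds.

Section Determinants.
Variables (R : realType) (g : R) (D : seq label).

Lemma PDn_det n y M : 0 < y -> size D = M ->
  PDn g D n y = (2 ^+ 'C(M.+1, 2))^-1 * \det (amat g D n y)
                * y ^+ ((countI D).+1 * countII D) / y ^+ (uphalf M * (M./2).+1).
Proof.
move=> y_gt0 <-; pose l k := nth (0%N, true) D k.
pose a (k : 'I_(size D).+1) := if (k < size D)%N then seed_a R (l k) else 0.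
pose b (k : 'I_(size D).+1) := if (k < size D)%N then seed_b g (l k) else 0.
pose E (k : 'I_(size D).+1) := if (k < size D)%N then Etil g (l k) else En R n.
pose q (k : 'I_(size D).+1) :=
  if (k < size D)%N then seed_poly g (l k) else lagpoly 1 (g - 2^-1) n.
rewrite /PDn (@wronskian_exppow _ _ _ (amat g D n y) y (g - 2^-1) a b E q y_gt0).
- rewrite big_ord_recr /= {2}/a {2}/b ltnn mul0r expR0 powRr0 mulr1.
  under eq_bigr => i _ do rewrite /a /b /l /= ltn_ord.
  rewrite mulr1 prod_seed_weights //.
  rewrite (_ : (countI D)%:R + g + 2^-1 = (countI D).+1%:R + g - 2^-1); last first.
    by rewrite -natr1; field.
  rewrite -(seed_weights_powR g (countI D).+1 (countII D) y_gt0) expRN.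
  have ex0 : expR ((countI D)%:R * y) != 0 by rewrite gt_eqF ?expR_gt0.
  have y0 : y ^+ (uphalf (size D) * (size D)./2.+1) != 0 by rewrite expf_neq0 ?gt_eqF.
  have two0 : 2 ^+ 'C((size D).+1, 2) != 0 :> R by rewrite expf_neq0 ?pnatr_eq0.
  by field; rewrite ex0 y0 two0.
- by rewrite size_rcons size_map.
- move=> k; rewrite nth_rcons size_map /a /b /q.
  case: ltnP => [kD | Dk]; first by rewrite (nth_map (0%N, true)) // mu_exppow.
  have -> : nat_of_ord k = size D by have := ltn_ord k; lia.
  by rewrite eqxx Pn_exppow.
- by move=> k; rewrite /a /b /E /q; case: ifP => _; [exact: seed_ode | exact: Pn_ode].
- move=> j k; rewrite /amat mxE /E /a /b /q /l; case: ifP => _.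
    by rewrite zetatil_dpoly xi_seed_poly.
  by rewrite zetan_dpoly laguerre_lagpoly.
Qed.

Lemma Xi_det y M : 0 < y -> size D = M ->
  Xi g D y = (2 ^+ 'C(M, 2))^-1 * \det (bmat g D y)
             * y ^+ (countI D * countII D) / y ^+ (M./2 * uphalf M).
Proof.
move=> y_gt0 <-; pose l (k : 'I_(size D)) := nth (0%N, true) D k.
rewrite /Xi (@wronskian_exppow _ _ _ (bmat g D y) y (g - 2^-1) (fun k => seed_a R (l k))
  (fun k => seed_b g (l k)) (fun k => Etil g (l k)) (fun k => seed_poly g (l k)) y_gt0).
- rewrite prod_seed_weights // -(seed_weights_powR g (countI D) (countII D) y_gt0) expRN.
  have ex0 : expR ((countI D)%:R * y) != 0 by rewrite gt_eqF ?expR_gt0.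
  have y0 : y ^+ ((size D)./2 * uphalf (size D)) != 0 by rewrite expf_neq0 ?gt_eqF.
  have two0 : 2 ^+ 'C(size D, 2) != 0 :> R by rewrite expf_neq0 ?pnatr_eq0.
  by field; rewrite ex0 y0 two0.
- by rewrite size_map.
- by move=> k; rewrite (nth_map (0%N, true)) // mu_exppow.
- by move=> k; exact: seed_ode.
- by move=> j k; rewrite /bmat mxE zetatil_dpoly xi_seed_poly.
Qed.

End Determinants.

Lemma laguerre_exponents (MI MII : nat) :
  let M := (MI + MII)%N in
  let fM' : int := ((MI%:Z - MII%:Z) %/ 2)%Z in
  let c : int := fM' + M%:Z - (2 * (M %/ 2)%N)%:Z in
  (MI.+1 * MII)%N%:Z - (uphalf M * (M./2).+1)%N%:Z = - ((fM' + 1) * c)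
  /\ (MI * MII)%N%:Z - (M./2 * uphalf M)%N%:Z = - (fM' * c).
Proof.
rewrite /= !uphalf_half -!divn2.
move: (odd_double_half MI) (odd_double_half MII).
move: (odd MI) (odd MII) (MI./2) (MII./2) => r s p q.
rewrite -!muln2 => <- <-.
by case: r; case: s => /=; split; nia.
Qed.

Theorem mainTheorem3 (R : realType) (g : R) (MI MII : nat) (D : seq label) (n : nat)
  (x : R) :
  2^-1 < g ->
  uniq D -> all (valid_label g) D ->
  countI D = MI -> countII D = MII ->
  0 < x ->
  let M := (MI + MII)%N in
  let fM' : int := ((MI%:Z - MII%:Z) %/ 2)%Z in
  let c : int := fM' + M%:Z - (2 * (M %/ 2)%N)%:Z in
  PDn g D n x = (2 ^+ ((M * M.+1) %/ 2))^-1 * \det (amat g D n x)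
                * x ^ (- ((fM' + 1) * c))
  /\
  Xi g D x = (2 ^+ ((M * M.-1) %/ 2))^-1 * \det (bmat g D x)
                * x ^ (- (fM' * c)).
Proof.
move=> _ _ _ countI_D countII_D x_gt0 M fM' c.
have [expP expXi] := laguerre_exponents MI MII.
have sizeD : size D = M.
  by rewrite /M -countI_D -countII_D -(count_predC (fun l : label => l.2) D).
have x_neq0 : x != 0 by rewrite gt_eqF.
split.
- rewrite (PDn_det g n x_gt0 sizeD) countI_D countII_D -expP expfzDr // -exprnN mulrA.
  by rewrite bin2 -divn2 mulnC.
- rewrite (Xi_det g x_gt0 sizeD) countI_D countII_D -expXi expfzDr // -exprnN mulrA.
  by rewrite bin2 -divn2.
Qed.
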